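(* Let $G:\mathbb R^2\to\mathbb R^2$ be a linear operator, identified with a real $2\times 2$ matrix. Then $G$ is a grid operator if and only if it is of the form $G=\begin{bmatrix}a+\frac{a'}{\sqrt2}&b+\frac{b'}{\sqrt2}\\ c+\frac{c'}{\sqrt2}&d+\frac{d'}{\sqrt2}\end{bmatrix}$, where $a,b,c,d,a',b',c',d'$ are integers satisfying $a+b+c+d\equiv 0\pmod 2$ and $a'\equiv b'\equiv c'\equiv d'\pmod 2$.
   Context: Let $\omega=e^{i\pi/4}$ and $\mathbb Z[\omega]=\{a_0+a_1\omega+a_2\omega^2+a_3\omega^3 : a_j\in\mathbb Z\}\subseteq\mathbb C$, regarded as a subset of $\mathbb R^2$ via $x+iy\mapsto(x,y)$. A real linear operator $G:\mathbb R^2\to\mathbb R^2$ is a grid operator if $G(\mathbb Z[\omega])\subseteq\mathbb Z[\omega]$. *)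

From HB Require Import structures.
From mathcomp Require Import all_boot all_order all_algebra.
From mathcomp Require Import complex.
Set Implicit Arguments. Unset Strict Implicit. Unset Printing Implicit Defensive.
Import Order.TTheory GRing.Theory Num.Theory.
Local Open Scope ring_scope.

Section GridDefs.
Variable R : rcfType.

(* omega = e^{i pi/4} = sqrt2/2 + i sqrt2/2 *)
Definition omega : R[i] :=
  Complex (Num.sqrt 2 / 2) (Num.sqrt 2 / 2).

Definition zomega_elt (a0 a1 a2 a3 : int) : R[i] :=
  a0%:~R + a1%:~R * omega + a2%:~R * omega ^+ 2 + a3%:~R * omega ^+ 3.

Definition toR2 (z : R[i]) : 'cV[R]_2 :=
  \col_(k < 2) (if k == 0 :> nat then complex.Re z else complex.Im z).

Definition in_Zomega (v : 'cV[R]_2) : Prop :=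
  exists a0 a1 a2 a3 : int, v = toR2 (zomega_elt a0 a1 a2 a3).

Definition grid_operator (G : 'M[R]_2) : Prop :=
  forall v : 'cV[R]_2, in_Zomega v -> in_Zomega (G *m v).
End GridDefs.

From HB Require Import structures.
From mathcomp Require Import all_boot all_order all_algebra.
From mathcomp Require Import complex ring zify.
Import Order.TTheory GRing.Theory Num.Theory.
Local Open Scope ring_scope.

(* Under x + iy |-> (x, y), Z[omega] is the set of points (x + x'/sqrt 2, y + y'/sqrt 2)
   with integers x, x', y, y' such that x' = y' (mod 2).  It is the Z-span of the images
   of 1, omega, omega^2, omega^3, so G is a grid operator iff it maps these four points
   into Z[omega].  The images of 1 and omega^2 = i are the columns of G, which gives the
   shape of the entries together with a' = c' and b' = d' (mod 2); the image of omega is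
   the sum of the columns divided by sqrt 2, and by the irrationality of sqrt 2 its
   membership amounts to a' = b', c' = d' and a + b = c + d (mod 2). *)

Section GridOperators.
Variable R : rcfType.
Local Notation s := (Num.sqrt (2 : R)).

Lemma sqrt2_mul : s * s = 2.
Proof. by rewrite -expr2 sqr_sqrtr // ler0n. Qed.

Lemma sqrt2_neq0 : s != 0.
Proof. by rewrite sqrtr_eq0 -ltNge ltr0n. Qed.

Lemma sqrt2_half : s / 2 = s^-1.
Proof.
apply: (mulfI sqrt2_neq0); rewrite mulrA sqrt2_mul divff ?pnatr_eq0 //.
by rewrite divff ?sqrt2_neq0.
Qed.

Lemma sqrn_eq_double_sqrn (m n : nat) : (n * n = m * m * 2)%N -> m = 0%N.
Proof.
move=> sq; apply/eqP; apply: contraT => m_neq0.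
have n_gt0 : (0 < n)%N.
  rewrite lt0n; apply: contraNneq m_neq0 => n0.
  by move: sq; rewrite n0 => /esym/eqP; rewrite !muln_eq0 orbb orbF.
have /(congr1 odd) := congr1 (logn 2) sq.
by rewrite !lognM ?muln_gt0 ?n_gt0 ?lt0n ?m_neq0 // !oddD !addbb.
Qed.

Definition zsqrt2 (m n : int) : R := m%:~R + n%:~R / s.

Lemma zsqrt2D m n m' n' : zsqrt2 m n + zsqrt2 m' n' = zsqrt2 (m + m') (n + n').
Proof. by rewrite /zsqrt2 !rmorphD /=; ring. Qed.

Lemma zsqrt2B m n m' n' : zsqrt2 m n - zsqrt2 m' n' = zsqrt2 (m - m') (n - n').
Proof. by rewrite /zsqrt2 !rmorphB /=; ring. Qed.

Lemma zsqrt2Mz k m n : k%:~R * zsqrt2 m n = zsqrt2 (k * m) (k * n).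
Proof. by rewrite /zsqrt2 !rmorphM /=; ring. Qed.

Lemma zsqrt2Ms m n : zsqrt2 m n * s = zsqrt2 n (2 * m).
Proof.
have two : (2%:~R : R) = s * s by rewrite sqrt2_mul.
by rewrite /zsqrt2 rmorphM /= two; field; exact: sqrt2_neq0.
Qed.

Lemma zsqrt2Vs m n : zsqrt2 m (2 * n) / s = zsqrt2 n m.
Proof. by rewrite -zsqrt2Ms mulfK ?sqrt2_neq0. Qed.

(* Irrationality of sqrt 2: the integer relation [n = -m sqrt 2] squares to [n^2 = 2 m^2]. *)
Lemma zsqrt2_eq0 m n : zsqrt2 m n = 0 -> m = 0 /\ n = 0.
Proof.
move=> z0; have n_eq : n%:~R = zsqrt2 m n * s - m%:~R * s.
  by rewrite /zsqrt2; field; exact: sqrt2_neq0.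
rewrite z0 mul0r sub0r in n_eq.
have /intr_inj sq : (n * n)%:~R = (m * m * 2)%:~R :> R.
  by rewrite !rmorphM /= n_eq mulrNN mulrACA sqrt2_mul.
have m0 : m = 0.
  apply/eqP; rewrite -absz_eq0; apply/eqP/(@sqrn_eq_double_sqrn _ `|n|%N).
  by have := congr1 absz sq; rewrite !abszM.
by move: sq; rewrite m0 !mul0r => /eqP; rewrite mulf_eq0 orbb => /eqP.
Qed.

Lemma zsqrt2_inj m n m' n' : zsqrt2 m n = zsqrt2 m' n' -> m = m' /\ n = n'.
Proof.
move=> /eqP; rewrite -subr_eq0 zsqrt2B => /eqP /zsqrt2_eq0 [].
by move=> /eqP; rewrite subr_eq0 => /eqP -> /eqP; rewrite subr_eq0 => /eqP ->.
Qed.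

Lemma omegaE : omega R = Complex s^-1 s^-1.
Proof. by rewrite /omega sqrt2_half. Qed.

Lemma omega2 : omega R ^+ 2 = 'i.
Proof.
rewrite omegaE expr2; apply/eqP; rewrite eq_complex /= -invfM sqrt2_mul subrr eqxx.
by apply/eqP; field.
Qed.

Lemma omega3 : omega R ^+ 3 = Complex (- s^-1) s^-1.
Proof.
rewrite exprS omega2 omegaE; apply/eqP; rewrite eq_complex /=.
by apply/andP; split; apply/eqP; ring.
Qed.

Lemma zomega_eltE a0 a1 a2 a3 :
  zomega_elt R a0 a1 a2 a3 = Complex (zsqrt2 a0 (a1 - a3)) (zsqrt2 a2 (a1 + a3)).
Proof.
rewrite /zomega_elt omega3 omega2 omegaE -!(rmorph_int (real_complex R)).
apply/eqP; rewrite eq_complex /zsqrt2 /= !rmorphB !rmorphD /=.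
by apply/andP; split; apply/eqP; ring.
Qed.

Lemma mulmx_toR2 (G : 'M[R]_2) z i :
  (G *m toR2 z) i 0 = G i 0 * complex.Re z + G i 1 * complex.Im z.
Proof.
rewrite mxE !big_ord_recl big_ord0 addr0 !mxE.
by have -> : lift ord0 (ord0 : 'I_1) = 1 :> 'I_2 by apply/val_inj.
Qed.

Lemma in_ZomegaP (v : 'cV[R]_2) :
  in_Zomega v <-> exists x x' y y' : int,
    [/\ v 0 0 = zsqrt2 x x', v 1 0 = zsqrt2 y y' & (x' = y' %[mod 2])%Z].
Proof.
split=> [[a0 [a1 [a2 [a3 ->]]]] | [x [x' [y [y' [vx vy xy]]]]]].
  exists a0, (a1 - a3), a2, (a1 + a3).
  by rewrite /toR2 !mxE zomega_eltE; split=> //; lia.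
have [k y'E] : exists k, y' = x' + 2 * k by exists (divz y' 2 - divz x' 2); lia.
exists x, (x' + k), y, k; apply/matrixP=> i j; rewrite ord1 /toR2 !mxE zomega_eltE.
case: i => [[|[|//]] lti] /=.
  by rewrite (_ : Ordinal lti = 0) ?vx; [congr zsqrt2; lia | apply/val_inj].
by rewrite (_ : Ordinal lti = 1) ?vy ?y'E; [congr zsqrt2; lia | apply/val_inj].
Qed.

Lemma in_ZomegaD (v w : 'cV[R]_2) : in_Zomega v -> in_Zomega w -> in_Zomega (v + w).
Proof.
move=> /in_ZomegaP [x [x' [y [y' [vx vy xy]]]]] /in_ZomegaP [u [u' [z [z' [wu wz uz]]]]].
apply/in_ZomegaP; exists (x + u), (x' + u'), (y + z), (y' + z').
by rewrite !mxE vx vy wu wz !zsqrt2D; split=> //; lia.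
Qed.

Lemma in_ZomegaZ k (v : 'cV[R]_2) : in_Zomega v -> in_Zomega (k%:~R *: v).
Proof.
move=> /in_ZomegaP [x [x' [y [y' [vx vy xy]]]]].
apply/in_ZomegaP; exists (k * x), (k * x'), (k * y), (k * y').
by rewrite !mxE vx vy !zsqrt2Mz; split=> //; lia.
Qed.

Lemma toR2_zomega_elt a0 a1 a2 a3 :
  toR2 (zomega_elt R a0 a1 a2 a3) =
  a0%:~R *: toR2 1 + a1%:~R *: toR2 (omega R) +
  a2%:~R *: toR2 (omega R ^+ 2) + a3%:~R *: toR2 (omega R ^+ 3).
Proof.
apply/matrixP=> i j; rewrite !mxE zomega_eltE omega3 omega2 omegaE.
by case: ifP => _; rewrite /= /zsqrt2 ?rmorphB ?rmorphD /=; ring.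
Qed.

Lemma in_Zomega_omegaX k : (k < 4)%N -> in_Zomega (toR2 (omega R ^+ k)).
Proof.
case: k => [|[|[|[|//]]]] _;
  [exists 1, 0, 0, 0 | exists 0, 1, 0, 0 | exists 0, 0, 1, 0 | exists 0, 0, 0, 1];
  by rewrite toR2_zomega_elt !(mulr0z, mulr1z, scale0r, scale1r, add0r, addr0).
Qed.

Lemma grid_operatorP (G : 'M[R]_2) :
  grid_operator G <-> forall k, (k < 4)%N -> in_Zomega (G *m toR2 (omega R ^+ k)).
Proof.
split=> [G_grid k /in_Zomega_omegaX | G_gen v [a0 [a1 [a2 [a3 ->]]]]]; first exact: G_grid.
rewrite toR2_zomega_elt !mulmxDr -!scalemxAr.
do 3?apply: in_ZomegaD; apply: in_ZomegaZ.
- exact: (G_gen 0%N).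
- exact: (G_gen 1%N).
- exact: G_gen.
- exact: G_gen.
Qed.

Definition grid_matrix (G : 'M[R]_2) : Prop :=
  exists a b c d a' b' c' d' : int,
    [/\ G 0 0 = zsqrt2 a a', G 0 1 = zsqrt2 b b',
         G 1 0 = zsqrt2 c c' & G 1 1 = zsqrt2 d d'] /\
    [/\ (a + b + c + d = 0 %[mod 2])%Z, (a' = b' %[mod 2])%Z,
         (b' = c' %[mod 2])%Z & (c' = d' %[mod 2])%Z].

Lemma grid_operator_matrix (G : 'M[R]_2) : grid_operator G -> grid_matrix G.
Proof.
move=> /grid_operatorP G_gen.
have /in_ZomegaP [a [a' [c [c' [Ga Gc ac]]]]] := G_gen 0%N isT.
have /in_ZomegaP [b [b' [d [d' [Gb Gd bd]]]]] := G_gen 2%N isT.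
have /in_ZomegaP [x [x' [y [y' [Gx Gy xy]]]]] := G_gen 1%N isT.
rewrite !mulmx_toR2 expr0 omega2 /= !(mulr1, mulr0, addr0, add0r) in Ga Gb Gc Gd.
rewrite !mulmx_toR2 expr1 omegaE /= -!mulrDl in Gx Gy.
have [abx ab'] : a + b = x' /\ a' + b' = 2 * x.
  by apply: zsqrt2_inj; rewrite -zsqrt2D -Ga -Gb -zsqrt2Ms -Gx divfK ?sqrt2_neq0.
have [cdy cd'] : c + d = y' /\ c' + d' = 2 * y.
  by apply: zsqrt2_inj; rewrite -zsqrt2D -Gc -Gd -zsqrt2Ms -Gy divfK ?sqrt2_neq0.
by exists a, b, c, d, a', b', c', d'; split; [split | split; lia].
Qed.

Lemma grid_matrix_operator (G : 'M[R]_2) : grid_matrix G -> grid_operator G.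
Proof.
case=> a [b [c [d [a' [b' [c' [d' [[Ga Gb Gc Gd] [abcd ab bc cd]]]]]]]]].
have [u abE] : exists u, a' + b' = 2 * u by exists (divz (a' + b') 2); lia.
have [w cdE] : exists w, c' + d' = 2 * w by exists (divz (c' + d') 2); lia.
have [u' baE] : exists u', b' - a' = 2 * u' by exists (divz (b' - a') 2); lia.
have [w' dcE] : exists w', d' - c' = 2 * w' by exists (divz (d' - c') 2); lia.
apply/grid_operatorP => -[|[|[|[|//]]]] _; apply/in_ZomegaP;
  rewrite !mulmx_toR2 ?expr0 ?expr1 ?omega2 ?omega3 ?omegaE /=.
- by exists a, a', c, c'; rewrite !(mulr1, mulr0, addr0); split=> //; lia.
- exists u, (a + b), w, (c + d); rewrite -!mulrDl Ga Gb Gc Gd !zsqrt2D abE cdE.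
  by rewrite !zsqrt2Vs; split=> //; lia.
- by exists b, b', d, d'; rewrite !(mulr1, mulr0, add0r); split=> //; lia.
- exists u', (b - a), w', (d - c); rewrite !mulrN ![- _ + _]addrC -!mulrBl.
  by rewrite Ga Gb Gc Gd !zsqrt2B baE dcE !zsqrt2Vs; split=> //; lia.
Qed.

End GridOperators.

Theorem lemma5p31 (R : rcfType) (G : 'M[R]_2) :
  grid_operator G <->
  exists a b c d a' b' c' d' : int,
    [/\ G 0 0 = a%:~R + a'%:~R / Num.sqrt 2,
         G 0 1 = b%:~R + b'%:~R / Num.sqrt 2,
         G 1 0 = c%:~R + c'%:~R / Num.sqrt 2 &
         G 1 1 = d%:~R + d'%:~R / Num.sqrt 2] /\
    [/\ (a + b + c + d = 0 %[mod 2])%Z,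
         (a' = b' %[mod 2])%Z,
         (b' = c' %[mod 2])%Z &
         (c' = d' %[mod 2])%Z].
Proof. exact: conj (@grid_operator_matrix R G) (@grid_matrix_operator R G). Qed.
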